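(* Let $\lambda>\frac16$. Then $\mu_\lambda$ is doubling: there exists $C_\lambda\ge1$ such that for every $x\in[0,1]$ and every $r>0$, $\mu_\lambda(B(x,2r))\le C_\lambda\,\mu_\lambda(B(x,r))$.
   Context: For $\lambda>\frac16$, $\gamma_\lambda$ is the unique real number $\ge1$ with $2\cdot3^{-\gamma_\lambda}+(6\lambda+1)6^{-\gamma_\lambda}+(6\lambda-1)6^{-\gamma_\lambda}=1$; $p_0=p_3=3^{-\gamma_\lambda}$, $p_1=(6\lambda+1)6^{-\gamma_\lambda}$, $p_2=(6\lambda-1)6^{-\gamma_\lambda}$; $S_0(x)=x/3$, $S_1(x)=x/6+1/3$, $S_2(x)=-x/6+2/3$, $S_3(x)=x/3+2/3$; $\mu_\lambda$ is the unique Borel probability measure on $[0,1]$ with $\mu_\lambda=\sum_{i=0}^3p_i\,\mu_\lambda\circ S_i^{-1}$. $B(x,r)$ is the open ball (interval) of center $x$ and radius $r$. *)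

From HB Require Import structures.
From mathcomp Require Import all_boot all_order all_algebra.
From mathcomp Require Import all_classical all_reals all_analysis.
Set Implicit Arguments. Unset Strict Implicit. Unset Printing Implicit Defensive.
Import Order.TTheory GRing.Theory Num.Theory.
Local Open Scope classical_set_scope.
Local Open Scope ring_scope.

Section Defs.
Variable R : realType.

Definition is_gamma (lam g : R) : Prop :=
  1 <= g /\
  2 * 3 `^ (- g) + (6 * lam + 1) * 6 `^ (- g) + (6 * lam - 1) * 6 `^ (- g) = 1.

Definition pw (lam g : R) (i : 'I_4) : R :=
  match val i with
  | 0%N => 3 `^ (- g)
  | 1%N => (6 * lam + 1) * 6 `^ (- g)
  | 2%N => (6 * lam - 1) * 6 `^ (- g)
  | _ => 3 `^ (- g)
  end.

Definition Smap (i : 'I_4) (x : R) : R :=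
  match val i with
  | 0%N => x / 3
  | 1%N => x / 6 + 1 / 3
  | 2%N => - x / 6 + 2 / 3
  | _ => x / 3 + 2 / 3
  end.

Definition oball (x r : R) : set R := [set y | x - r < y < x + r].

Definition is_mu_lambda (lam g : R) (mu : probability R R) : Prop :=
  mu `[0, 1]%classic = 1%E /\
  forall A : set R, measurable A ->
    mu A = (\sum_(i < 4) (pw lam g i)%:E * mu (Smap i @^-1` A))%E.
End Defs.

From HB Require Import structures.
From mathcomp Require Import all_boot all_order all_algebra.
From mathcomp Require Import all_classical all_reals all_analysis.
From mathcomp Require Import lra.
Import Order.TTheory GRing.Theory Num.Theory.
Set Implicit Arguments. Unset Strict Implicit. Unset Printing Implicit Defensive.
Local Open Scope classical_set_scope.
Local Open Scope ring_scope.

(* Ball masses satisfy the self-similarity relation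
     mu B(x, r) = sum_i p_i mu B(S_i^-1 x, r / ratio_i),   ratio_i in {1/3, 1/6}.
   The endpoints 0 and 1 are fixed by S_0 and S_3, of ratio 1/3 and weight 3^-g,
   so near them the relation has a single term and the mass of B(z, r) is
   comparable to r^g. The junctions 1/3, 1/2, 2/3 are images of 0 and 1, so
   balls near them also have mass comparable to r^g, which gives doubling there.
   A ball B(x, 2r) meeting no junction lies in a single piece S_i[0, 1], where
   the relation again has a single term and turns doubling at radius r into
   doubling at radius r / ratio_i >= 3r; induction on the scale concludes.
   The proof uses only that the weights are positive (this is where
   lambda > 1/6 enters) and that p_0 = p_3 = 3^-g with g >= 0. *)

Lemma scale_ind (R : archiRealFieldType) (a : R) (P : R -> Prop) : 0 < a ->
    (forall r, a <= r -> P r) ->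
    (forall r, 0 < r -> r < a -> (forall s, 2 * r <= s -> P s) -> P r) ->
  forall r, 0 < r -> P r.
Proof.
move=> a_gt0 base step.
have P_pow2 n r : a <= 2 ^+ n * r -> P r.
  elim: n r => [|n IHn] r; first by rewrite expr0 mul1r; exact: base.
  move=> ar; have [|ra] := leP a r; first exact: base.
  have r_gt0 : 0 < r.
    by rewrite -(pmulr_rgt0 _ (exprn_gt0 n.+1 (ltr0Sn R 1))) (lt_le_trans a_gt0).
  apply: step => // s le2rs; apply: IHn; apply: le_trans ar _.
  by rewrite exprSr -mulrA ler_wpM2l // exprn_ge0.
move=> r r_gt0; have := archi_boundP (divr_ge0 (ltW a_gt0) (ltW r_gt0)).
set k := Num.bound _ => ark; apply: (P_pow2 k).
by rewrite -ler_pdivrMr // (le_trans (ltW ark)) // -natrX ler_nat ltnW // ltn_expl.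
Qed.

Section powR_facts.
Variable R : realType.

Lemma ge0_ler_powRl (g x y : R) : 0 <= g -> 0 <= x -> x <= y -> x `^ g <= y `^ g.
Proof.
move=> g_ge0 x_ge0 xy.
by apply: ge0_ler_powR; rewrite // nnegrE (le_trans x_ge0).
Qed.

Lemma powRN_scale (g a x : R) : 0 < a -> 0 <= x -> a `^ (- g) * (a * x) `^ g = x `^ g.
Proof.
move=> a_gt0 x_ge0.
by rewrite powRM ?(ltW a_gt0) // powRN mulKf // gt_eqF // powR_gt0.
Qed.

Lemma ge0_powR_ge1 (g x : R) : 0 <= g -> 1 <= x -> 1 <= x `^ g.
Proof. by move=> g_ge0 x_ge1; have := ge0_ler_powRl g_ge0 ler01 x_ge1; rewrite powR1. Qed.

Lemma ge0_powR_le1 (g x : R) : 0 <= g -> 0 <= x <= 1 -> x `^ g <= 1.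
Proof.
by move=> g_ge0 /andP[x_ge0 x_le1]; have := ge0_ler_powRl g_ge0 x_ge0 x_le1; rewrite powR1.
Qed.

End powR_facts.

Section probability_on_unit_interval.
Variables (R : realType) (mu : probability R R).

Definition mass (A : set R) : R := fine (mu A).

Lemma measure_mass (A : set R) : measurable A -> mu A = (mass A)%:E.
Proof.
move=> mA; rewrite /mass fineK // ge0_fin_numE ?measure_ge0 //.
exact: le_lt_trans (probability_le1 mu mA) (ltry 1).
Qed.

Lemma mass_ge0 (A : set R) : 0 <= mass A.
Proof. by rewrite fine_ge0 // measure_ge0. Qed.

Lemma mass_le1 (A : set R) : measurable A -> mass A <= 1.
Proof. by move=> mA; rewrite -lee_fin -measure_mass // probability_le1. Qed.

Lemma le_mass (A B : set R) :
  measurable A -> measurable B -> A `<=` B -> mass A <= mass B.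
Proof. by move=> mA mB AB; rewrite -lee_fin -!measure_mass // le_measure ?inE. Qed.

Lemma oball_itv (x r : R) : oball x r = `]x - r, x + r[%classic.
Proof. by apply/seteqP; split => y /=; rewrite in_itv. Qed.

Lemma measurable_oball (x r : R) : measurable (oball x r).
Proof. by rewrite oball_itv; exact: measurable_itv. Qed.

Definition bmass (x r : R) : R := mass (oball x r).

Lemma bmass_ge0 x r : 0 <= bmass x r.
Proof. exact: mass_ge0. Qed.

Lemma bmass_le1 x r : bmass x r <= 1.
Proof. exact: mass_le1 (measurable_oball x r). Qed.

Lemma bmass_sub x r y s :
  y - s <= x - r -> x + r <= y + s -> bmass x r <= bmass y s.
Proof.
move=> *; apply: le_mass; try exact: measurable_oball.
by move=> t /andP[? ?]; apply/andP; lra.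
Qed.

Definition misses01 (z r : R) : Prop := z + r <= 0 \/ 1 <= z - r.

Hypothesis mu01 : mu `[0, 1]%classic = 1%E.

Lemma mass_le_on01 (A B : set R) :
  measurable A -> measurable B -> A `&` `[0, 1]%classic `<=` B -> mass A <= mass B.
Proof.
move=> mA mB AB; set I := `[0, 1]%classic : set R.
have mI : measurable I by exact: measurable_itv.
rewrite -lee_fin -!measure_mass // (measureDI mu mA mI) -[leRHS]add0e.
apply: leeD; last by rewrite le_measure ?inE //; exact: measurableI.
have muC : mu (~` I) = 0%E by rewrite probability_setC // mu01 subee.
by rewrite -muC le_measure ?inE //; [exact: measurableD | exact: measurableC].
Qed.

Lemma le_bmass_on01 x r y s :
    (forall t, 0 <= t <= 1 -> x - r < t < x + r -> y - s < t < y + s) ->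
  bmass x r <= bmass y s.
Proof.
move=> sub; apply: mass_le_on01; try exact: measurable_oball.
by move=> t [xrt]; rewrite /= in_itv => /sub; apply.
Qed.

Lemma bmass_left z r : z <= 0 -> bmass z r <= bmass 0 r.
Proof. by move=> *; apply: le_bmass_on01 => t; lra. Qed.

Lemma bmass_right z r : 1 <= z -> bmass z r <= bmass 1 r.
Proof. by move=> *; apply: le_bmass_on01 => t; lra. Qed.

Lemma bmass_out z r : misses01 z r -> bmass z r = 0.
Proof.
rewrite /misses01 => out; apply/le_anti; rewrite bmass_ge0 andbT.
have <- : mass set0 = 0 by rewrite /mass measure0.
apply: mass_le_on01 => //; first exact: measurable_oball.
by move=> t [/andP[? ?]] /=; rewrite in_itv /=; lra.
Qed.

Lemma bmass_cover x r : x - r < 0 -> 1 < x + r -> bmass x r = 1.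
Proof.
move=> *; apply/le_anti; rewrite bmass_le1 /=.
have <- : mass `[0, 1]%classic = 1 by rewrite /mass mu01.
apply: mass_le_on01; [exact: measurable_itv | exact: measurable_oball |].
by move=> t [+ _]; rewrite /= in_itv /= => ?; apply/andP; lra.
Qed.

End probability_on_unit_interval.

Section pieces.
Variable R : realType.

Definition Sinv (i : 'I_4) (y : R) : R :=
  match val i with
  | 0%N => 3 * y
  | 1%N => 6 * y - 2
  | 2%N => 4 - 6 * y
  | _ => 3 * y - 2
  end.

Definition Sdil (i : 'I_4) : R :=
  match val i with 0%N => 3 | 1%N => 6 | 2%N => 6 | _ => 3 end.

Lemma SmapK i : cancel (Smap i) (Sinv i).
Proof. by case: i => [[|[|[|[|?]]]] ?] y; rewrite /Smap /Sinv /=; lra. Qed.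

Lemma preimage_Smap_oball i (x r : R) :
  Smap i @^-1` oball x r = oball (Sinv i x) (Sdil i * r).
Proof.
apply/seteqP; split=> y; rewrite /oball /Smap /Sinv /Sdil /=;
  by case: i => [[|[|[|[|?]]]] ?] //=; lra.
Qed.

Lemma Sdil_ge3 i : 3 <= Sdil i.
Proof. by case: i => [[|[|[|[|?]]]] ?]; rewrite /Sdil //=; lra. Qed.

Lemma Sdil_le6 i : Sdil i <= 6.
Proof. by case: i => [[|[|[|[|?]]]] ?]; rewrite /Sdil //=; lra. Qed.

Lemma Sinv_dist i (x y : R) : `|Sinv i x - Sinv i y| = Sdil i * `|x - y|.
Proof.
have : Sinv i x - Sinv i y = Sdil i * (x - y) \/ Sinv i x - Sinv i y = - (Sdil i * (x - y)).
  by case: i => [[|[|[|[|?]]]] ?] //; rewrite /Sinv /Sdil /=; [left|left|right|left]; lra.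
have Sdil_ge0 : 0 <= Sdil i by apply: le_trans (Sdil_ge3 i); lra.
by case=> ->; rewrite ?normrN normrM ger0_norm.
Qed.

Lemma Sinv_cover (y : R) : 0 <= y <= 1 -> exists i, 0 <= Sinv i y <= 1.
Proof.
move=> y01; have [y1|y1] := leP y (1/3); first by exists 0; rewrite /Sinv /=; lra.
have [y2|y2] := leP y (1/2); first by exists 1; rewrite /Sinv /=; lra.
have [y3|y3] := leP y (2/3); first by exists 2; rewrite /Sinv /=; lra.
by exists 3; rewrite /Sinv /=; lra.
Qed.

(* The points where consecutive pieces [Smap i @` `[0, 1]] meet. *)
Definition junction (c : R) : Prop := c = 1/3 \/ c = 1/2 \/ c = 2/3.

Lemma Sinv_junction i c : junction c -> Sinv i c <= 0 \/ 1 <= Sinv i c.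
Proof.
move=> [->|[->|->]]; case: i => [[|[|[|[|?]]]] ?]; rewrite /Sinv /=;
  by [left; lra | right; lra].
Qed.

Lemma ball_in_piece (x r : R) : 0 <= x <= 1 ->
    (forall c, junction c -> 2 * r <= `|x - c|) ->
  exists i, 0 <= Sinv i x <= 1 /\
    forall j, j != i -> misses01 (Sinv j x) (Sdil j * (2 * r)).
Proof.
move=> x01 far.
have := far (1/3) (or_introl erefl); have := far (1/2) (or_intror (or_introl erefl)).
have := far (2/3) (or_intror (or_intror erefl)); rewrite !ler_normr => f3 f2 f1.
have [x1|x1] := leP x (1/3); [exists 0 | have [x2|x2] := leP x (1/2);
  [exists 1 | have [x3|x3] := leP x (2/3); [exists 2 | exists 3]]];
  (split; first by rewrite /Sinv /=; lra);
  case=> [[|[|[|[|?]]]] ?] //= _; rewrite /misses01 /Sinv /Sdil /=;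
  by [left; lra | right; lra].
Qed.

End pieces.
Arguments Sdil {R} i.

Section self_similar_measure.
Variables (R : realType) (p : 'I_4 -> R) (g : R) (mu : probability R R).
Hypothesis p_gt0 : forall i, 0 < p i.
Hypothesis g_ge0 : 0 <= g.
Hypothesis p0E : p 0 = 3 `^ (- g).
Hypothesis p3E : p 3 = 3 `^ (- g).
Hypothesis mu01 : mu `[0, 1]%classic = 1%E.
Hypothesis mu_selfsim : forall A, measurable A ->
  mu A = (\sum_(i < 4) (p i)%:E * mu (Smap i @^-1` A))%E.

Local Notation bm := (bmass mu).

Lemma bmass_selfsim x r : bm x r = \sum_i p i * bm (Sinv i x) (Sdil i * r).
Proof.
rewrite {1}/bmass {1}/mass (mu_selfsim (measurable_oball x r)).
under eq_bigr => i _ do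
  rewrite preimage_Smap_oball (measure_mass mu (measurable_oball _ _)) -EFinM.
by rewrite sumEFin.
Qed.

Lemma bmass_term_le i x r : p i * bm (Sinv i x) (Sdil i * r) <= bm x r.
Proof.
rewrite [leRHS]bmass_selfsim (bigD1 i) //= lerDl sumr_ge0 // => j _.
by rewrite mulr_ge0 ?bmass_ge0 // ltW.
Qed.

Lemma bmass_single i x r :
    (forall j, j != i -> misses01 (Sinv j x) (Sdil j * r)) ->
  bm x r = p i * bm (Sinv i x) (Sdil i * r).
Proof.
move=> out; rewrite bmass_selfsim (bigD1 i) //= big1 ?addr0 // => j.
by move=> /out/(bmass_out mu01) ->; rewrite mulr0.
Qed.

Lemma p_le1 i : p i <= 1.
Proof.
have := bmass_term_le i (Smap i (1/2)) 1; rewrite SmapK mulr1 bmass_cover //.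
- by rewrite mulr1 => /le_trans; apply; exact: bmass_le1.
- by have := Sdil_ge3 R i; lra.
- by have := Sdil_ge3 R i; lra.
Qed.

Definition pmin : R := \big[Num.min/1]_i p i.

Lemma pmin_gt0 : 0 < pmin.
Proof. by apply: lt_bigmin => // i _; exact: p_gt0. Qed.

Lemma pmin_le i : pmin <= p i.
Proof. exact: bigmin_le. Qed.

Lemma pmin_le1 : pmin <= 1.
Proof. exact: bigmin_le_id. Qed.

Lemma bmass_ge_pmin_exp n y : 0 <= y <= 1 -> pmin ^+ n <= bm y (3 / 2 / 3 ^+ n).
Proof.
elim: n y => [|n IHn] y y01; first by rewrite expr0 divr1 bmass_cover //; lra.
have [i yi] := Sinv_cover y01; apply: le_trans (bmass_term_le i y _).
have pmin_ge0 := ltW pmin_gt0.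
rewrite exprS ler_pM ?exprn_ge0 ?pmin_le //; apply: le_trans (IHn _ yi) _.
set s := 3 / 2 / 3 ^+ n; have -> : 3 / 2 / 3 ^+ n.+1 = s / 3.
  by rewrite exprSr invfM mulrA.
have s_ge0 : 0 <= s by rewrite divr_ge0 ?exprn_ge0.
have : 3 * (s / 3) <= Sdil i * (s / 3) by rewrite ler_wpM2r ?Sdil_ge3 ?divr_ge0.
by move=> ?; apply: bmass_sub; lra.
Qed.

Lemma bmass_end_zoom z y r : z = 0 \/ z = 1 ->
  3 `^ (- g) * bm (3 * y - 2 * z) (3 * r) <= bm y r.
Proof.
case=> ->.
- by have := bmass_term_le 0 y r; rewrite p0E mulr0 subr0.
- by have := bmass_term_le 3 y r; rewrite p3E mulr1.
Qed.

Lemma bmass_end_fix z r : z = 0 \/ z = 1 -> r <= 1/3 ->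
  bm z r = 3 `^ (- g) * bm z (3 * r).
Proof.
move=> z01 r13; have [i [Sz Siz Sdi pE]] : exists i : 'I_4,
    [/\ forall j, j != i -> misses01 (Sinv j z) (Sdil j * r),
        Sinv i z = z, Sdil i = 3 :> R & p i = 3 `^ (- g)].
  case: z01 => ->; [exists 0 | exists 3]; rewrite /Sinv ?p0E ?p3E /=; split => //; try lra;
    case=> [[|[|[|[|?]]]] ?] //= _; rewrite /misses01 /Sinv /Sdil /=;
    by [left; lra | right; lra].
by rewrite (bmass_single Sz) Siz Sdi pE.
Qed.

Lemma bmass_end_upper z r : z = 0 \/ z = 1 -> 0 < r -> bm z r <= (3 * r) `^ g.
Proof.
move=> z01; move: r; apply: (@scale_ind _ (1/3)) => // r.
  move=> r13; apply: le_trans (bmass_le1 mu _ _) _.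
  by apply: ge0_powR_ge1 => //; lra.
move=> r_gt0 r13 IH; rewrite bmass_end_fix //; last lra.
have r3_ge0 : 0 <= 3 * r by rewrite mulr_ge0 // ltW.
by rewrite -[leRHS](powRN_scale g (_ : 0 < 3) r3_ge0) // ler_wpM2l ?powR_ge0 // IH //; lra.
Qed.

Lemma bmass_upper_off z r : z <= 0 \/ 1 <= z -> 0 < r -> bm z r <= (3 * r) `^ g.
Proof.
case=> [z_le0|z_ge1] r_gt0.
- by apply: le_trans (bmass_left mu01 _ z_le0) _; apply: bmass_end_upper => //; left.
- by apply: le_trans (bmass_right mu01 _ z_ge1) _; apply: bmass_end_upper => //; right.
Qed.

Lemma bmass_end_lower z y r : z = 0 \/ z = 1 -> 0 <= y <= 1 -> `|y - z| <= 2 * r ->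
  0 < r -> r <= 1/6 -> pmin ^+ 3 * r `^ g <= bm y r.
Proof.
move=> z01 + + r_gt0; move: r r_gt0 y.
apply: (@scale_ind _ (1/18)) => // r.
  move=> r18 y y01 _ r16; have pmin_ge0 := ltW pmin_gt0.
  apply: le_trans (_ : pmin ^+ 3 <= _).
    by rewrite ler_piMr ?exprn_ge0 // ge0_powR_le1 //; lra.
  apply: le_trans (bmass_ge_pmin_exp 3 y01) (bmass_sub mu _ _); rewrite !exprS expr0; lra.
move=> r_gt0 r18 IH y y01 yz r16; set y' := 3 * y - 2 * z.
have y'z : `|y' - z| <= 2 * (3 * r).
  rewrite (_ : y' - z = 3 * (y - z)); last by rewrite /y'; lra.
  by rewrite normrM gtr0_norm //; lra.
have y'01 : 0 <= y' <= 1.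
  by move: yz; rewrite /y' ler_norml; case: z01 {y'z} => ->; lra.
apply: le_trans (bmass_end_zoom y r z01).
rewrite -(powRN_scale g (_ : 0 < 3) (ltW r_gt0)) // mulrCA ler_wpM2l ?powR_ge0 //.
by apply: IH => //; lra.
Qed.

Lemma bmass_piece_end_lower i z x r : z = 0 \/ z = 1 -> 0 <= Sinv i x <= 1 ->
    `|Sinv i x - z| <= 2 * (Sdil i * r) -> 0 < r -> r <= 1/54 ->
  pmin ^+ 4 * r `^ g <= bm x r.
Proof.
move=> z01 xi xz r_gt0 r54; have pmin_ge0 := ltW pmin_gt0.
have Sdi3 := Sdil_ge3 R i; have Sdi6 := Sdil_le6 R i.
have Sr_gt0 : 0 < Sdil i * r by rewrite mulr_gt0 //; lra.
have Sr16 : Sdil i * r <= 1/6 by nra.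
apply: le_trans (bmass_term_le i x r).
rewrite exprS -mulrA ler_pM ?mulr_ge0 ?exprn_ge0 ?powR_ge0 ?pmin_le //.
apply: le_trans (bmass_end_lower z01 xi xz Sr_gt0 Sr16).
by rewrite ler_wpM2l ?exprn_ge0 //; apply: ge0_ler_powRl => //; [exact: ltW | nra].
Qed.

Lemma bmass_junction_lower c x r : junction c -> 0 <= x <= 1 ->
  `|x - c| < 2 * r -> r <= 1/54 -> pmin ^+ 4 * r `^ g <= bm x r.
Proof.
move=> jc x01 xc r54; have r_gt0 : 0 < r by have := normr_ge0 (x - c); lra.
have [i xi] := Sinv_cover x01.
have : `|Sinv i x - Sinv i c| < 2 * (Sdil i * r).
  by rewrite Sinv_dist mulrCA ltr_pM2l // (lt_le_trans _ (Sdil_ge3 R i)).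
rewrite ltr_norml => /andP[d1 d2].
(* [Sinv i c] lies outside ]0, 1[ and [Sinv i x] inside, so the endpoint on the
   side of [Sinv i c] is even closer to [Sinv i x]. *)
case: (Sinv_junction i jc) => side.
- by apply: (@bmass_piece_end_lower i 0) => //; [left | rewrite ler_norml; lra].
- by apply: (@bmass_piece_end_lower i 1) => //; [right | rewrite ler_norml; lra].
Qed.

Lemma bmass_junction_upper c r : junction c -> 0 < r -> bm c r <= 4 * (18 * r) `^ g.
Proof.
move=> jc r_gt0; rewrite bmass_selfsim.
rewrite (_ : 4 * _ = \sum_(i < 4) (18 * r) `^ g); last by rewrite sumr_const card_ord mulr_natl.
apply: ler_sum => i _; have := Sdil_le6 R i; have := Sdil_ge3 R i => Sdi3 Sdi6.
apply: le_trans (_ : 1 * (3 * (Sdil i * r)) `^ g <= _).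
  apply: ler_pM; [exact: ltW | exact: bmass_ge0 | exact: p_le1 |].
  by apply: bmass_upper_off (Sinv_junction i jc) _; rewrite mulr_gt0 //; lra.
by rewrite mul1r ge0_ler_powRl // ?mulr_ge0 //; nra.
Qed.

(* The ratio of [bmass_junction_upper] at radius [4 r] to [bmass_junction_lower]. *)
Definition Cdbl : R := 4 * 72 `^ g / pmin ^+ 4.

Lemma Cdbl_pmin : Cdbl * pmin ^+ 4 = 4 * 72 `^ g.
Proof. by rewrite divfK // expf_neq0 // gt_eqF // pmin_gt0. Qed.

Lemma Cdbl_pmin_ge1 : 1 <= Cdbl * pmin ^+ 4.
Proof. by rewrite Cdbl_pmin; have := @ge0_powR_ge1 _ g 72 g_ge0; lra. Qed.

Lemma Cdbl_ge0 : 0 <= Cdbl.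
Proof. by rewrite divr_ge0 ?exprn_ge0 ?mulr_ge0 ?powR_ge0 // ltW // pmin_gt0. Qed.

Lemma Cdbl_ge1 : 1 <= Cdbl.
Proof.
apply: le_trans Cdbl_pmin_ge1 _; rewrite ler_piMr ?Cdbl_ge0 // exprn_ile1 ?pmin_le1 //.
exact: ltW pmin_gt0.
Qed.

Lemma bmass_doubling_junction c x r : junction c -> 0 <= x <= 1 ->
  `|x - c| < 2 * r -> r <= 1/54 -> bm x (2 * r) <= Cdbl * bm x r.
Proof.
move=> jc x01 xc r54; have r_gt0 : 0 < r by have := normr_ge0 (x - c); lra.
have : bm x (2 * r) <= bm c (4 * r) by apply: bmass_sub; move: xc; rewrite ltr_norml; lra.
move/le_trans; apply; apply: le_trans (bmass_junction_upper jc _) _; first lra.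
apply: le_trans (ler_wpM2l Cdbl_ge0 (bmass_junction_lower jc x01 xc r54)).
rewrite [leRHS]mulrA Cdbl_pmin -mulrA -powRM ?(ltW r_gt0) //.
by rewrite (_ : 18 * (4 * r) = 72 * r) //; lra.
Qed.

Lemma bmass_doubling_piece i x r C : 0 <= C ->
    (forall j, j != i -> misses01 (Sinv j x) (Sdil j * (2 * r))) ->
    bm (Sinv i x) (2 * (Sdil i * r)) <= C * bm (Sinv i x) (Sdil i * r) ->
  bm x (2 * r) <= C * bm x r.
Proof.
move=> C_ge0 out dbl; rewrite (bmass_single out) [Sdil i * _]mulrCA.
apply: le_trans (ler_wpM2l (ltW (p_gt0 i)) dbl) _.
by rewrite mulrCA ler_wpM2l // bmass_term_le.
Qed.

Theorem bmass_doubling x r : 0 <= x <= 1 -> 0 < r -> bm x (2 * r) <= Cdbl * bm x r.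
Proof.
move=> + r_gt0; move: r r_gt0 x; apply: (@scale_ind _ (1/54)) => // r.
  move=> r54 x x01; apply: le_trans (bmass_le1 mu _ _) _.
  apply: le_trans Cdbl_pmin_ge1 _; rewrite ler_wpM2l ?Cdbl_ge0 //.
  apply: le_trans (bmass_ge_pmin_exp 4 x01) (bmass_sub mu _ _); rewrite !exprS expr0; lra.
move=> r_gt0 r54 IH x x01.
have [[c [jc xc]] | near_none] := pselect (exists c, junction c /\ `|x - c| < 2 * r).
  exact: bmass_doubling_junction jc x01 xc (ltW r54).
have far c : junction c -> 2 * r <= `|x - c|.
  by move=> jc; rewrite leNgt; apply/negP => xc; apply: near_none; exists c.
have [i [xi out]] := ball_in_piece x01 far.
apply: bmass_doubling_piece Cdbl_ge0 out _.
by apply: IH xi; have := Sdil_ge3 R i; nra.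
Qed.

End self_similar_measure.

Lemma pw_gt0 (R : realType) (lam g : R) i : 1 / 6 < lam -> 0 < pw lam g i.
Proof.
move=> lam6; case: i => [[|[|[|[|?]]]] ?] //; rewrite /pw /= ?powR_gt0 //;
  by rewrite mulr_gt0 ?powR_gt0 //; lra.
Qed.

Theorem lemma4p1 (R : realType) (lam g : R) (mu : probability R R) :
  1 / 6 < lam ->
  is_gamma lam g ->
  is_mu_lambda lam g mu ->
  exists C : R, 1 <= C /\
    forall x r : R, 0 <= x <= 1 -> 0 < r ->
      (mu (oball x (2 * r)) <= C%:E * mu (oball x r))%E.
Proof.
move=> lam6 [g_ge1 _] [mu01 mu_selfsim].
have p_gt0 i := pw_gt0 g i lam6.
have g_ge0 : 0 <= g by lra.
exists (Cdbl (pw lam g) g); split; first exact: Cdbl_ge1.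
move=> x r x01 r_gt0.
rewrite !(measure_mass mu (measurable_oball _ _)) -EFinM lee_fin.
exact: bmass_doubling.
Qed.
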